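(* Let $(F,t)\in U$ with $t\neq0$, $Y=Y_{F,t}$, and $i\in\{1,2\}$. Then $D_i\setminus D_i^\circ=\Gamma_1\cup\Gamma_2$.
   Context: $U=U_0\times\mathbb{A}^1$, where $U_0$ is the space of cubic forms $F(x_0,\dots,x_3)$ such that the curve cut out by $F$ on the quadric $x_0x_3=x_1x_2$ in $\mathbb{P}^3$ is smooth, avoids $[0,0,0,1]$, and is tangent with multiplicity $2$ to the lines $x_0=x_1=0$ and $x_0=x_2=0$. $Y_{F,t}\subset\mathbb{P}^5$ is $x_4^3-F(x_0,\dots,x_3)+x_5(x_0x_3-x_1x_2)+t\,x_0x_5^2=0$, $F(Y)$ its Fano variety of lines, $p_0=[0,\dots,0,1]$. $C_i=(x_0=x_i=x_5=0)\cap(x_4^3=F)$, $\hat C_i\subset Y$ the cone over $C_i$ with vertex $p_0$, $\Gamma_i\subset F(Y)$ the set of lines $\overline{p_0p}$, $p\in C_i$. $D_i\subset F(Y)$ is the locus of lines meeting $\hat C_i$, and $D_i^\circ\subset D_i$ the subset of lines meeting $\hat C_i\setminus\{p_0\}$ in exactly one point. *)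

From HB Require Import structures.
From mathcomp Require Import all_boot all_order all_algebra.
From mathcomp Require Import mpoly.
Set Implicit Arguments. Unset Strict Implicit. Unset Printing Implicit Defensive.
Import GRing.Theory.
Local Open Scope ring_scope.

(* Ground field: K is an algebraically closed field of characteristic 0
   (stands for the complex numbers). Projective points are
   nonzero row vectors up to scaling; lines of P^5 are 2-dimensional
   K-subspaces of 'rV[K]_6. *)

Section Defs.
Variable K : closedFieldType.

Definition Qpoly : {mpoly K[4]} := 'X_0 * 'X_3 - 'X_1 * 'X_2.

Definition ev4 (p : {mpoly K[4]}) (x : 'rV[K]_4) : K := p.@[fun j => x ord0 j].

(* smoothness of the curve {Q = F = 0} in P^3 (Jacobian criterion for the
   complete intersection): at every point of the curve the gradients of Q and
   F are linearly independent *)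
Definition curve_smooth (F : {mpoly K[4]}) : Prop :=
  forall x : 'rV[K]_4, x != 0 -> ev4 Qpoly x = 0 -> ev4 F x = 0 ->
    forall a b : K,
      (forall j : 'I_4, a * ev4 (Qpoly^`M(j)) x + b * ev4 (F^`M(j)) x = 0) ->
      a = 0 /\ b = 0.

Definition curve_avoids_e3 (F : {mpoly K[4]}) : Prop :=
  ev4 F (\row_(j < 4) (if j == 3 :> nat then 1 else 0)) != 0.

Definition restr_line (F : {mpoly K[4]}) (P R : 'rV[K]_4) : {poly K} :=
  (map_mpoly polyC F).@[fun j => (P ord0 j)%:P + (R ord0 j)%:P * 'X].

(* intersection multiplicity at the point [P] of the curve {Q = F = 0} with a
   line of P^3 contained in Q, the line being spanned by P and R: order of
   vanishing at u = 0 of F(P + u R) *)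
Definition int_mult (F : {mpoly K[4]}) (P R : 'rV[K]_4) : nat :=
  mup 0 (restr_line F P R).

(* the curve {Q = F = 0} is tangent with multiplicity 2 to the line
   {x0 = xk = 0} (k = 1 or 2), which lies on Q: there is a point P of the
   line at which the intersection multiplicity of curve and line is 2 *)
Definition tangent_mult2 (F : {mpoly K[4]}) (k : 'I_4) : Prop :=
  exists P R : 'rV[K]_4,
    [/\ P ord0 0 = 0, P ord0 k = 0, R ord0 0 = 0 & R ord0 k = 0] /\
    [/\ P != 0, R \notin <[P]>%VS, ev4 F P = 0, restr_line F P R != 0
        & int_mult F P R = 2%N].

Definition inU0 (F : {mpoly K[4]}) : Prop :=
  [/\ F \is 3.-homog, curve_smooth F, curve_avoids_e3 F,
      tangent_mult2 F 1 & tangent_mult2 F 2].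

Definition crd (v : 'rV[K]_6) (k : nat) : K := v ord0 (@inord 5 k).

Definition proj4 (v : 'rV[K]_6) : 'rV[K]_4 :=
  \row_(j < 4) v ord0 (widen_ord (isT : (4 <= 6)%N) j).

Definition Yeq (F : {mpoly K[4]}) (t : K) (v : 'rV[K]_6) : K :=
  crd v 4 ^+ 3 - ev4 F (proj4 v) + crd v 5 * ev4 Qpoly (proj4 v)
  + t * crd v 0 * crd v 5 ^+ 2.

Definition e5 : 'rV[K]_6 := \row_(j < 6) (if j == 5 :> nat then 1 else 0).

Definition is_line (L : {vspace 'rV[K]_6}) : Prop := \dim L = 2%N.

Definition in_FY (F : {mpoly K[4]}) (t : K) (L : {vspace 'rV[K]_6}) : Prop :=
  is_line L /\ forall v, v \in L -> Yeq F t v = 0.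

(* affine cone of \hat C_i (cone over C_i with vertex p0) *)
Definition in_Chat (F : {mpoly K[4]}) (i : nat) (v : 'rV[K]_6) : Prop :=
  [/\ crd v 0 = 0, crd v i = 0 & crd v 4 ^+ 3 = ev4 F (proj4 v)].

Definition in_C (F : {mpoly K[4]}) (i : nat) (v : 'rV[K]_6) : Prop :=
  [/\ crd v 0 = 0, crd v i = 0, crd v 5 = 0 & crd v 4 ^+ 3 = ev4 F (proj4 v)].

Definition Gamma (F : {mpoly K[4]}) (i : nat) (L : {vspace 'rV[K]_6}) : Prop :=
  exists v : 'rV[K]_6, [/\ v != 0, in_C F i v & L = (<[e5]> + <[v]>)%VS].

Definition D (F : {mpoly K[4]}) (t : K) (i : nat) (L : {vspace 'rV[K]_6}) : Prop :=
  in_FY F t L /\ exists v, [/\ v \in L, v != 0 & in_Chat F i v].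

(* D_i^o : lines of D_i meeting \hat C_i \ {p0} in exactly one point *)
Definition Dcirc (F : {mpoly K[4]}) (t : K) (i : nat) (L : {vspace 'rV[K]_6}) : Prop :=
  D F t i L /\
  exists v, [/\ v \in L, v != 0, in_Chat F i v, v \notin <[e5]>%VS &
    forall w, w \in L -> w != 0 -> in_Chat F i w -> w \notin <[e5]>%VS ->
      w \in <[v]>%VS].

End Defs.

(* If L passes through the vertex e5, write it as
   e5 + v with x5(v) = 0: the equation of Y along L is the quadratic
   (x4^3 - F) + (x0 x3 - x1 x2) s + t x0 s^2 in the e5-coordinate s, so t <> 0 and
   char K <> 2 force x0 = x1 x2 = 0 and x4^3 = F, i.e. L lies in Gamma_1 or Gamma_2.
   Conversely these lines lie on Y, and a line through the vertex of the cone Ĉ_i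
   that meets Ĉ_i elsewhere meets it in a whole line, so it is not in D_i°.
   If L missed e5, it would meet Ĉ_i in two independent points, hence lie in the plane
   x0 = x_i = 0, where Y reduces to Ĉ_i.  Projection from e5 would then map L onto the
   line x0 = x_i = 0 of the quadric, along which F is the cube of the linear form x4,
   contradicting the tangency of order exactly 2 of the curve with that line. *)

From HB Require Import structures.
From mathcomp Require Import all_boot all_order all_algebra.
From mathcomp Require Import mpoly ring.
From Stdlib Require Import Classical.
Set Implicit Arguments. Unset Strict Implicit. Unset Printing Implicit Defensive.
Import GRing.Theory.
Local Open Scope ring_scope.

Section TwoLines.
Variables (K : fieldType) (vT : vectType K).
Implicit Types (a b u : vT) (L : {vspace vT}).

Lemma lin_indep2 a b (x y : K) : a != 0 -> b \notin <[a]>%VS ->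
  x *: a + y *: b = 0 -> x = 0 /\ y = 0.
Proof.
move=> a0 bNa xy0.
have y0 : y = 0.
  apply: contraNeq bNa => y0; apply/vlineP; exists (- x / y).
  apply: (scalerI y0); rewrite scalerA mulrCA mulfV // mulr1 scaleNr.
  by apply/eqP; rewrite -addr_eq0 addrC xy0.
by move: xy0; rewrite y0 scale0r addr0 => /eqP; rewrite scaler_eq0 (negbTE a0) orbF => /eqP.
Qed.

Lemma mem_add_linesP u a b :
  reflect (exists x y, u = x *: a + y *: b) (u \in <[a]> + <[b]>)%VS.
Proof.
apply: (iffP memv_addP) => [[_ /vlineP[x ->] [_ /vlineP[y ->] ->]]|[x [y ->]]].
  by exists x, y.
by exists (x *: a); rewrite ?memvZ ?memv_line //; exists (y *: b); rewrite ?memvZ ?memv_line.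
Qed.

Lemma dim_add_lines_le a b : (\dim (<[a]> + <[b]>) <= 2)%N.
Proof.
apply: leq_trans (dimv_add_leqif _ _) _; rewrite !dim_vline.
exact: leq_add (leq_b1 _) (leq_b1 _).
Qed.

Lemma dim_add_lines a b : a != 0 -> b \notin <[a]>%VS -> \dim (<[a]> + <[b]>) = 2%N.
Proof.
move=> a0 bNa; have b0 : b != 0 by apply: contraNneq bNa => ->; rewrite mem0v.
rewrite dimv_disjoint_sum ?dim_vline ?a0 ?b0 //.
apply/eqP; rewrite -subv0; apply/subvP => u /memv_capP[/vlineP[x ->] /vlineP[y xy]].
have [-> _] : x = 0 /\ - y = 0.
  by apply: lin_indep2 a0 bNa _; rewrite xy scaleNr subrr.
by rewrite scale0r mem0v.
Qed.

Lemma add_lines_eq L a b : (\dim L <= 2)%N -> a \in L -> b \in L ->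
  a != 0 -> b \notin <[a]>%VS -> L = (<[a]> + <[b]>)%VS.
Proof.
move=> dL aL bL a0 bNa; apply/eqP; rewrite eq_sym eqEdim subv_add -!memvE aL bL.
by rewrite dim_add_lines.
Qed.

Lemma exists_notin_line L a : \dim L = 2%N -> exists2 b, b \in L & b \notin <[a]>%VS.
Proof.
move=> dL; apply/subvPn; apply: contraTN isT => /dimvS.
by rewrite dL dim_vline ltnNge leq_b1.
Qed.

Lemma memv_line_sym a b : a != 0 -> a \in <[b]>%VS -> b \in <[a]>%VS.
Proof.
move=> a0 /vlineP[c ac]; have c0 : c != 0 by apply: contraNneq a0 => c0; rewrite ac c0 scale0r.
by apply/vlineP; exists c^-1; rewrite ac scalerA mulVf ?scale1r.
Qed.

Lemma memv_line_addr_eq0 a b : a \notin <[b]>%VS -> a + b \in <[a]>%VS -> b = 0.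
Proof.
move=> aNb /vlineP[c abc]; apply: contraNeq aNb => b0; apply: memv_line_sym b0 _.
by apply/vlineP; exists (c - 1); rewrite scalerBl scale1r -abc addrC addKr.
Qed.

End TwoLines.

Lemma mupX (K : fieldType) (x : K) (p : {poly K}) n :
  p != 0 -> mup x (p ^+ n) = (mup x p * n)%N.
Proof.
move=> p0; elim: n => [|n IHn]; first by rewrite expr0 muln0 mupNroot // root1.
by rewrite exprS mupM ?expf_neq0 // IHn mulnS.
Qed.

(* If [p - q] were nonzero, [(p - q) * 'X + 1] would be a nonconstant polynomial without roots. *)
Lemma eq_poly_closed (K : closedFieldType) (p q : {poly K}) :
  (forall x, p.[x] = q.[x]) -> p = q.
Proof.
move=> pq; apply/eqP; rewrite -subr_eq0; apply: contraT => pq0.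
have /closed_rootP[x /rootP] : size ((p - q) * 'X + 1) != 1%N.
  rewrite size_polyDl size_mulX // ?eqSS ?size_poly_eq0 //.
  by rewrite -polyC1 size_polyC oner_eq0 ltnS lt0n size_poly_eq0.
by rewrite hornerD hornerM hornerD hornerN pq subrr mul0r hornerC add0r => /eqP; rewrite oner_eq0.
Qed.

Lemma quadratic_eq0 (K : fieldType) (a b c : K) : (2%:R : K) != 0 ->
  (forall x, a + b * x + c * x ^+ 2 = 0) -> [/\ a = 0, b = 0 & c = 0].
Proof.
move=> two0 q0.
have ea : a = a + b * 0 + c * 0 ^+ 2 by ring.
have eb : 2%:R * b = (a + b * 1 + c * 1 ^+ 2) - (a + b * (-1) + c * (-1) ^+ 2) by ring.
have ec : 2%:R * c = (a + b * 1 + c * 1 ^+ 2) + (a + b * (-1) + c * (-1) ^+ 2)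
                     - 2%:R * (a + b * 0 + c * 0 ^+ 2) by ring.
rewrite !q0 ?subrr ?addr0 ?mulr0 ?subr0 in ea eb ec.
by split => //; [move/eqP: eb | move/eqP: ec]; rewrite mulf_eq0 (negbTE two0) => /eqP.
Qed.

Section Coordinates.
Variable K : closedFieldType.
Implicit Types (v w : 'rV[K]_6) (F : {mpoly K[4]}).

Lemma crdD v w k : crd (v + w) k = crd v k + crd w k.
Proof. by rewrite /crd mxE. Qed.

Lemma crdB v w k : crd (v - w) k = crd v k - crd w k.
Proof. by rewrite /crd !mxE. Qed.

Lemma crdZ v c k : crd (c *: v) k = c * crd v k.
Proof. by rewrite /crd mxE. Qed.

Lemma crd_e5 k : (k < 6)%N -> crd (e5 K) k = if k == 5%N then 1 else 0.
Proof. by move=> k6; rewrite /crd /e5 mxE inordK. Qed.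

Lemma proj4E v (j : 'I_4) : proj4 v ord0 j = crd v j.
Proof.
rewrite /proj4 /crd mxE; congr (v ord0 _); apply: val_inj.
by rewrite /= inordK // (ltn_trans (ltn_ord j)).
Qed.

Lemma crd_proj4 v n : (n < 4)%N -> crd v n = proj4 v ord0 (inord n).
Proof. by move=> n4; rewrite proj4E inordK. Qed.

Lemma proj4D v w : proj4 (v + w) = proj4 v + proj4 w.
Proof. by apply/rowP => j; rewrite !mxE. Qed.

Lemma proj4Z v c : proj4 (c *: v) = c *: proj4 v.
Proof. by apply/rowP => j; rewrite !mxE. Qed.

Lemma proj4B v w : proj4 (v - w) = proj4 v - proj4 w.
Proof. by apply/rowP => j; rewrite !mxE. Qed.

Lemma proj4_e5 : proj4 (e5 K) = 0.
Proof. by apply/rowP => j; rewrite !mxE; case: j => [[|[|[|[|]]]] ?]. Qed.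

Lemma row6_eq v w : proj4 v = proj4 w -> crd v 4 = crd w 4 -> crd v 5 = crd w 5 -> v = w.
Proof.
move=> pvw e4 e5; apply/rowP => j; rewrite -[j]inord_val; change (crd v j = crd w j).
by case: j => [[|[|[|[|[|[|//]]]]]] _] //=; rewrite !crd_proj4 // pvw.
Qed.

Lemma ev4Z F c (y : 'rV[K]_4) : F \is 3.-homog -> ev4 F (c *: y) = c ^+ 3 * ev4 F y.
Proof.
move=> /dhomogP hF; rewrite /ev4 !mevalE big_distrr /= big_seq [RHS]big_seq.
apply: eq_bigr => m hm; rewrite mulrCA; congr (_ * _).
rewrite -[X in c ^+ X](hF m hm) /= mdegE -prodrXr -big_split /=.
by apply: eq_bigr => j _; rewrite mxE exprMn.
Qed.

Lemma ev4_0 F : F \is 3.-homog -> ev4 F 0 = 0.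
Proof. by move=> hF; rewrite -(scale0r 0) ev4Z // expr0n mul0r. Qed.

Lemma ev4Q v : ev4 (Qpoly K) (proj4 v) = crd v 0 * crd v 3 - crd v 1 * crd v 2.
Proof. by rewrite /ev4 /Qpoly mevalB !mevalM !mevalXU !proj4E. Qed.

Lemma horner_restr_line F (P R : 'rV[K]_4) x :
  (restr_line F P R).[x] = ev4 F (P + x *: R).
Proof.
rewrite /restr_line /ev4; elim/mpolyind: F => [|c m p _ _ IHp].
  by rewrite raddf0 !meval0 horner0.
rewrite raddfD /= map_mpolyZ map_mpolyX !mevalD !mevalZ hornerD IHp; congr (_ + _).
rewrite hornerM hornerC !mevalX; congr (_ * _).
rewrite -horner_evalE rmorph_prod; apply: eq_bigr => j _.
by rewrite rmorphXn /= horner_evalE !mxE hornerD hornerM hornerX !hornerC mulrC.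
Qed.

Lemma Yeq_vertex_line F t v x : crd v 5 = 0 ->
  Yeq F t (x *: e5 K + v) = crd v 4 ^+ 3 - ev4 F (proj4 v)
    + (crd v 0 * crd v 3 - crd v 1 * crd v 2) * x + t * crd v 0 * x ^+ 2.
Proof.
move=> v5; rewrite /Yeq ev4Q !crdD !crdZ !crd_e5 // v5 proj4D proj4Z proj4_e5.
by rewrite scaler0 add0r /=; ring.
Qed.

Lemma Yeq_coord_plane F t i v : i = 1%N \/ i = 2%N -> crd v 0 = 0 -> crd v i = 0 ->
  Yeq F t v = crd v 4 ^+ 3 - ev4 F (proj4 v).
Proof.
move=> hi v0 vi; rewrite /Yeq ev4Q v0.
have -> : crd v 1 * crd v 2 = 0 by case: hi vi => -> ->; rewrite ?mul0r ?mulr0.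
ring.
Qed.

End Coordinates.

Section LinesOnY.
Variables (K : closedFieldType) (F : {mpoly K[4]}) (t : K).
Hypothesis homF : F \is 3.-homog.
Implicit Types (v w : 'rV[K]_6) (L : {vspace 'rV[K]_6}).

Lemma e5_neq0 : e5 K != 0.
Proof. by apply/eqP => /rowP/(_ (inord 5)); rewrite !mxE inordK //= => /eqP; rewrite oner_eq0. Qed.

Lemma notin_e5_line v : crd v 5 = 0 -> v != 0 -> v \notin <[e5 K]>%VS.
Proof.
move=> v5; apply: contraNN => /vlineP[c vc].
by move: v5; rewrite vc crdZ crd_e5 // mulr1 => ->; rewrite scale0r.
Qed.

Lemma Gamma_FY k L : k = 1%N \/ k = 2%N -> Gamma F k L -> in_FY F t L.
Proof.
move=> hk [v [v0 [c0 ck c5 c4] ->]].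
split; first exact: dim_add_lines e5_neq0 (notin_e5_line c5 v0).
move=> _ /mem_add_linesP[x [y ->]].
rewrite Yeq_vertex_line; last by rewrite crdZ c5 mulr0.
rewrite proj4Z ev4Z // !crdZ c0 -c4.
by case: hk ck => -> ->; ring.
Qed.

Lemma vertex_line_Gamma L : [pchar K] =i pred0 -> t != 0 ->
  in_FY F t L -> e5 K \in L -> Gamma F 1 L \/ Gamma F 2 L.
Proof.
move=> charK t0 [dimL YL] eL.
have [w wL wNe] := exists_notin_line (e5 K) dimL.
pose v := w - crd w 5 *: e5 K.
have v5 : crd v 5 = 0 by rewrite /v crdB crdZ crd_e5 //= mulr1 subrr.
have vL : v \in L by rewrite memvB // memvZ.
have vNe : v \notin <[e5 K]>%VS by rewrite /v rpredBr ?memvZ ?memv_line.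
have v0 : v != 0 by apply: contraNneq vNe => ->; rewrite mem0v.
have L_eq : L = (<[e5 K]> + <[v]>)%VS by apply: add_lines_eq; rewrite ?dimL ?e5_neq0.
have two0 : (2%:R : K) != 0 by rewrite (pcharf0P _).1.
have [c4 c12 c0] := quadratic_eq0 two0 (fun x =>
  etrans (esym (Yeq_vertex_line F t x v5)) (YL _ (memvD (memvZ x eL) vL))).
move/eqP: c0; rewrite mulf_eq0 (negbTE t0) /= => /eqP c0.
have {}c4 : crd v 4 ^+ 3 = ev4 F (proj4 v) by apply/eqP; rewrite -subr_eq0 c4.
move/eqP: c12; rewrite c0 mul0r sub0r oppr_eq0 mulf_eq0 => /orP[] /eqP ck;
  [left | right]; by exists v; do !split.
Qed.

Section ConeChat.
Variable i : nat.
Hypothesis hi : i = 1%N \/ i = 2%N.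

Lemma crd_e5_i : crd (e5 K) i = 0.
Proof. by case: hi => ->; rewrite crd_e5. Qed.

Lemma Chat_e5 : in_Chat F i (e5 K).
Proof. by split; rewrite ?crd_e5_i ?proj4_e5 ?ev4_0 ?crd_e5 ?expr0n. Qed.

Lemma Chat_addr_e5 v : in_Chat F i v -> in_Chat F i (v + e5 K).
Proof.
by case=> v0 vi v4; split; rewrite ?proj4D crdD ?crd_e5_i ?proj4_e5 ?crd_e5 ?addr0.
Qed.

Lemma Gamma_D k L : k = 1%N \/ k = 2%N -> Gamma F k L -> D F t i L.
Proof.
move=> hk GL; split; first exact: Gamma_FY GL.
case: GL => v [_ _ ->]; exists (e5 K).
by split; [rewrite memvE addvSl | exact: e5_neq0 | exact: Chat_e5].
Qed.

Lemma e5_notDcirc L : e5 K \in L -> ~ Dcirc F t i L.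
Proof.
move=> eL [_ [v [vL _ vC vNe v_uniq]]].
have veNe : v + e5 K \notin <[e5 K]>%VS by rewrite rpredDr ?memv_line.
have : v + e5 K \in <[v]>%VS.
  apply: v_uniq => //; first exact: memvD.
    by apply: contraNneq veNe => ->; rewrite mem0v.
  exact: Chat_addr_e5.
by move/(memv_line_addr_eq0 vNe)/eqP; rewrite (negbTE e5_neq0).
Qed.

Lemma FY_sub_Chat L v w : in_FY F t L -> v \in L -> w \in L -> v != 0 ->
  w \notin <[v]>%VS -> in_Chat F i v -> in_Chat F i w -> {in L, forall u, in_Chat F i u}.
Proof.
move=> [dL YL] vL wL v0 wNv [cv0 cvi _] [cw0 cwi _] u uL.
have := uL; rewrite (add_lines_eq _ vL wL) ?dL // => /mem_add_linesP[x [y ue]].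
have cu0 : crd u 0 = 0 by rewrite ue crdD !crdZ cv0 cw0 !mulr0 addr0.
have cui : crd u i = 0 by rewrite ue crdD !crdZ cvi cwi !mulr0 addr0.
by split => //; apply/eqP; rewrite -subr_eq0 -(Yeq_coord_plane F t hi cu0 cui) YL.
Qed.

Lemma Chat_proj4_eq0 u : in_Chat F i u -> proj4 u = 0 -> u \in <[e5 K]>%VS.
Proof.
move=> [_ _ u4] pu; apply/vlineP; exists (crd u 5); apply: row6_eq.
- by rewrite pu proj4Z proj4_e5 scaler0.
- rewrite crdZ crd_e5 // mulr0.
  by move: u4; rewrite pu ev4_0 // => /eqP; rewrite expf_eq0 => /andP[_ /eqP].
- by rewrite crdZ crd_e5 // mulr1.
Qed.

Lemma mem_coord_plane (y : 'rV[K]_4) : y ord0 0 = 0 -> y ord0 (inord i) = 0 ->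
  y \in (<[delta_mx ord0 (inord (3 - i))]> + <[delta_mx ord0 (inord 3)]>)%VS.
Proof.
move=> y0 yi; apply/mem_add_linesP; exists (y ord0 (inord (3 - i))), (y ord0 (inord 3)).
have y0' : y ord0 (inord 0) = 0 by rewrite -y0; congr (y ord0 _); apply: val_inj; rewrite /= inordK.
apply/rowP => j; rewrite !mxE -[j]inord_val.
have eq_inord a b : (a < 4)%N -> (b < 4)%N -> (inord a == inord b :> 'I_4) = (a == b).
  by move=> a4 b4; rewrite -(inj_eq val_inj) /= !inordK.
case: hi yi => -> yi; case: j => [[|[|[|[|//]]]] ?] /=; rewrite ?y0' ?yi !eq_inord //=.
all: by rewrite !mulr0 ?mulr1 ?addr0 ?add0r.
Qed.

Lemma Chat_proj4_onto L : {in L, forall u, in_Chat F i u} -> e5 K \notin L -> \dim L = 2%N ->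
  forall y : 'rV[K]_4, y ord0 0 = 0 -> y ord0 (inord i) = 0 ->
  exists2 u, u \in L & proj4 u = y.
Proof.
move=> LC eNL dL y y0 yi.
have proj4_inj u : u \in L -> proj4 u = 0 -> u = 0.
  move=> uL /(Chat_proj4_eq0 (LC u uL)) ue; apply: contraNeq eNL => u0.
  by apply: subvP (memv_line_sym u0 ue); rewrite -memvE.
have [v vL vN0] := exists_notin_line 0 dL.
have v0 : v != 0 by apply: contraNneq vN0 => ->; apply: mem0v.
have [w wL wNv] := exists_notin_line v dL.
have pv0 : proj4 v != 0 by apply: contraNneq v0 => /(proj4_inj v vL) ->.
have pwNpv : proj4 w \notin <[proj4 v]>%VS.
  apply: contra wNv => /vlineP[c pwc]; apply/vlineP; exists c; apply/eqP; rewrite -subr_eq0.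
  by apply/eqP/proj4_inj; rewrite ?memvB ?memvZ // proj4B proj4Z pwc subrr.
have in_plane u : u \in L -> proj4 u \in
    (<[delta_mx ord0 (inord (3 - i))]> + <[delta_mx ord0 (inord 3)]>)%VS.
  move=> uL; have [u0 ui _] := LC u uL; have i4 : (i < 4)%N by case: hi => ->.
  by apply: mem_coord_plane; rewrite proj4E ?inordK.
move: (mem_coord_plane y0 yi).
rewrite (add_lines_eq (dim_add_lines_le _ _) (in_plane v vL) (in_plane w wL) pv0 pwNpv).
case/mem_add_linesP => x [z ->]; exists (x *: v + z *: w); first by rewrite memvD ?memvZ.
by rewrite proj4D !proj4Z.
Qed.

Lemma Chat_restr_line_cube L p r : {in L, forall u, in_Chat F i u} -> p \in L -> r \in L ->
  restr_line F (proj4 p) (proj4 r) = ((crd p 4)%:P + (crd r 4)%:P * 'X) ^+ 3.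
Proof.
move=> LC pL rL; apply: eq_poly_closed => x.
rewrite horner_restr_line -proj4Z -proj4D.
have [_ _ <-] := LC _ (memvD pL (memvZ x rL)).
by rewrite crdD crdZ horner_exp hornerD hornerM hornerX !hornerC mulrC.
Qed.

(* Projecting from [e5] maps [L] onto the tangent line of the quadric, along which
   [F] becomes the cube of [x4]: its contact order with the curve is then 0 mod 3. *)
Lemma Chat_line_e5 L : tangent_mult2 F (inord i) ->
  {in L, forall u, in_Chat F i u} -> \dim L = 2%N -> e5 K \in L.
Proof.
move=> [P [R [[P0 Pi R0 Ri] [_ _ _ q0 mult2]]]] LC dL; apply: contraT => eNL.
have [p pL pP] := Chat_proj4_onto LC eNL dL P0 Pi.
have [r rL rR] := Chat_proj4_onto LC eNL dL R0 Ri.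
move: q0 mult2; rewrite /int_mult -pP -rR (Chat_restr_line_cube LC pL rL).
set c := _ + _ => c3_0; rewrite mupX; last by apply: contraNneq c3_0 => ->; rewrite expr0n.
by move/(congr1 (modn^~ 3)); rewrite modnMl.
Qed.

Lemma D_notDcirc_e5 L : tangent_mult2 F (inord i) ->
  D F t i L -> ~ Dcirc F t i L -> e5 K \in L.
Proof.
move=> tangent DL nDcL; have [[dL YL] [v [vL v0 vC]]] := DL.
apply: contraT => eNL.
have vNe : v \notin <[e5 K]>%VS.
  apply: contra eNL => /(memv_line_sym v0) ev.
  by apply: subvP ev; rewrite -memvE.
have [w [wL wC wNv]] : exists w, [/\ w \in L, in_Chat F i w & w \notin <[v]>%VS].
  apply: NNPP => noW; apply: nDcL; split => //; exists v; split => // u uL _ uC _.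
  by apply: NNPP => uNv; apply: noW; exists u; split => //; apply/negP.
by rewrite (Chat_line_e5 tangent (FY_sub_Chat DL.1 vL wL v0 wNv vC wC) dL) in eNL.
Qed.

End ConeChat.

End LinesOnY.

Unset Implicit Arguments.
Set Strict Implicit.

Theorem lemma5p8 (K : closedFieldType) (hchar : [pchar K] =i pred0)
  (F : {mpoly K[4]}) (t : K) (hU : inU0 F) (ht : t != 0)
  (i : nat) (hi : i = 1%N \/ i = 2%N) :
  forall L : {vspace 'rV[K]_6},
    (D F t i L /\ ~ Dcirc F t i L) <-> (Gamma F 1 L \/ Gamma F 2 L).
Proof.
have [homF _ _ tangent1 tangent2] := hU.
have tangent : tangent_mult2 F (inord i).
  case: hi => ->; [rewrite (_ : inord 1 = 1) | rewrite (_ : inord 2 = 2)] => //;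
    by apply: val_inj; rewrite /= inordK.
move=> L; split => [[DL nDcL] | GL].
  exact: vertex_line_Gamma hchar ht DL.1 (D_notDcirc_e5 homF hi tangent DL nDcL).
have eL : e5 K \in L by case: GL => -[v [_ _ ->]]; rewrite memvE addvSl.
split; last exact: (e5_notDcirc hi eL).
by case: GL; apply: (Gamma_D t homF hi); [left | right].
Qed.
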